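(* Let $n$ be a positive integer and let $a,b$ be integers with $0\le a,b\le n$. Then there exists an orientation of the $n$-cube $Q_n$ in which every vertex has in-degree equal to $a$ or to $b$ if and only if there exist non-negative integers $s$ and $t$ such that $s+t=2^n$ and $as+bt=n2^{n-1}$.
   Context: The $n$-cube $Q_n$ is the graph whose vertices are the binary $n$-tuples, two vertices being adjacent iff they differ in exactly one coordinate. An orientation assigns to each edge a head and a tail; the in-degree of a vertex is the number of edges whose head is that vertex. *)

From mathcomp Require Import all_boot.
Set Implicit Arguments. Unset Strict Implicit. Unset Printing Implicit Defensive.

Definition cube_vertex (n : nat) := {ffun 'I_n -> bool}.

Definition cube_adj (n : nat) (x y : cube_vertex n) : bool :=
  #|[set i : 'I_n | x i != y i]| == 1.

(* An orientation of Q_n: a relation [o x y] meaning "the edge xy is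
   oriented from tail x to head y"; for each edge exactly one direction
   is chosen.  (Values of o on non-edges are irrelevant.) *)
Definition is_orientation (n : nat) (o : cube_vertex n -> cube_vertex n -> bool) : Prop :=
  forall x y : cube_vertex n, cube_adj x y -> o x y = ~~ o y x.

Definition indeg (n : nat) (o : cube_vertex n -> cube_vertex n -> bool) (y : cube_vertex n) : nat :=
  #|[set x : cube_vertex n | cube_adj x y && o x y]|.

(* Necessity is the handshake lemma: the in-degrees add up to the n 2^(n-1) edges,
   so the numbers s, t of vertices of in-degree a, b satisfy the two equations.

   For sufficiency we may assume a <= b and a + b <= n, since reversing every edge
   replaces a, b by n - b, n - a.  An orientation is described by deciding, at each
   vertex y and in each direction i, whether y is the head of its i-edge; flipping
   coordinate i must reverse that decision.  Split the coordinates into a pairs, a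
   block of length d = b - a = r 2^j with r odd, and a tail.  In each pair exactly
   one edge enters y.  Tail edges enter the vertices whose parity outside the pairs
   is odd.  At an even vertex the block edges all enter or all leave it, according
   to a mark; at an odd vertex the block edge i enters iff its neighbour across i is
   marked.  Marking the even vertices whose xor of block keys lies below c, where
   r c = 2b - n (possible by the count equation), an odd vertex receives exactly
   r c block edges, so every in-degree is a or b. *)

From HB Require Import structures.
From Stdlib Require Import PeanoNat.
From mathcomp Require Import all_boot zify.
Set Implicit Arguments. Unset Strict Implicit. Unset Printing Implicit Defensive.

Section Cube.
Variable n : nat.
Local Notation V := (cube_vertex n).

Definition flip (y : V) (i : 'I_n) : V := [ffun j => if j == i then ~~ y j else y j].

Lemma flipE y i j : flip y i j = if j == i then ~~ y j else y j.
Proof. by rewrite ffunE. Qed.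

Lemma flipK y i : flip (flip y i) i = y.
Proof. by apply/ffunP=> j; rewrite !flipE; case: eqP => // ->; rewrite negbK. Qed.

Lemma flip_inj y : injective (flip y).
Proof.
move=> i k /ffunP /(_ i); rewrite !flipE eqxx; case: eqP => // _.
by case: (y i).
Qed.

Lemma cube_adj_flip y i : cube_adj (flip y i) y.
Proof.
rewrite /cube_adj; suff -> : [set j | flip y i j != y j] = [set i] by rewrite cards1.
by apply/setP=> j; rewrite !inE flipE; case: (j =P i) => _; case: (y j).
Qed.

Lemma cube_adjP (x y : V) : cube_adj x y -> exists i, x = flip y i.
Proof.
move=> /cards1P [i /setP hi]; exists i; apply/ffunP=> j.
move: (hi j); rewrite !inE flipE.
case: (j =P i) => [->|_]; first by case: (x i) (y i) => [] [].
by move/negbFE/eqP.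
Qed.

Lemma cube_adjC (x y : V) : cube_adj x y = cube_adj y x.
Proof. by rewrite /cube_adj; congr (_ == _); apply: eq_card => j; rewrite !inE eq_sym. Qed.

Lemma card_cube_nbrs (y : V) : #|[set x | cube_adj x y]| = n.
Proof.
have -> : [set x | cube_adj x y] = [set flip y i | i : 'I_n].
  apply/setP=> x; rewrite inE; apply/idP/imsetP; first by case/cube_adjP=> i ->; exists i.
  by case=> i _ ->; apply: cube_adj_flip.
by rewrite card_imset ?card_ord //; apply: flip_inj.
Qed.

(* [h y i] says that the edge of direction [i] at [y] has its head at [y]. *)
Definition heads_consistent (h : V -> 'I_n -> bool) : Prop :=
  forall y i, h (flip y i) i = ~~ h y i.

Section OrientationOfHeads.
Variable h : V -> 'I_n -> bool.
Hypothesis hK : heads_consistent h.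

Definition orient_by (x y : V) : bool := [exists i, (x i != y i) && h y i].

Lemma orient_by_flip y i : orient_by (flip y i) y = h y i.
Proof.
apply/existsP/idP=> [[j /andP [hj hh]]|hi]; last first.
  by exists i; rewrite hi flipE eqxx andbT; case: (y i).
by move: hj; rewrite flipE; case: (j =P i) => [<-|_] //; rewrite eqxx.
Qed.

Lemma orient_by_is_orientation : is_orientation orient_by.
Proof.
move=> x y /cube_adjP [i ->]; rewrite orient_by_flip.
have := orient_by_flip (flip y i) i; rewrite flipK => ->.
by rewrite hK negbK.
Qed.

Lemma indeg_orient_by (y : V) : indeg orient_by y = #|[set i | h y i]|.
Proof.
rewrite /indeg.
have -> : [set x | cube_adj x y && orient_by x y] = [set flip y i | i in [set i | h y i]].
  apply/setP=> x; rewrite inE; apply/andP/imsetP.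
    by case=> /cube_adjP [i ->]; rewrite orient_by_flip => hi; exists i; rewrite ?inE.
  by case=> i; rewrite inE => hi ->; rewrite cube_adj_flip orient_by_flip.
by rewrite card_imset //; apply: flip_inj.
Qed.

End OrientationOfHeads.

Lemma heads_consistentC h : heads_consistent h -> heads_consistent (fun y i => ~~ h y i).
Proof. by move=> hK y i; rewrite hK. Qed.

Lemma card_heads_compl (h : V -> 'I_n -> bool) y :
  #|[set i | ~~ h y i]| = n - #|[set i | h y i]|.
Proof.
have <- : #|~: [set i | h y i]| = #|[set i | ~~ h y i]|.
  by apply: eq_card => i; rewrite !inE.
by rewrite cardsCs card_ord setCK.
Qed.

End Cube.

Lemma card_cube_vertex n : #|{: cube_vertex n}| = 2 ^ n.
Proof. by rewrite card_ffun card_bool card_ord. Qed.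

Lemma card_set_sum (T : finType) (P : pred T) : #|[set x | P x]| = \sum_x (P x : nat).
Proof. by rewrite -sum1dep_card big_mkcond /=; apply: eq_bigr => x _; case: (P x). Qed.

Lemma sum_indeg n (o : cube_vertex n -> cube_vertex n -> bool) :
  is_orientation o -> (\sum_y indeg o y).*2 = n * 2 ^ n.
Proof.
move=> ho.
have indegE y : indeg o y = \sum_x (cube_adj x y && o x y : nat).
  by rewrite /indeg card_set_sum.
have outdegE : \sum_y indeg o y = \sum_y \sum_x (cube_adj x y && o y x : nat).
  under eq_bigr do rewrite indegE.
  by rewrite exchange_big; apply: eq_bigr => y _; apply: eq_bigr => x _; rewrite cube_adjC.
rewrite -addnn {1}outdegE (eq_bigr _ (fun y _ => indegE y)) -big_split /=.
rewrite -card_cube_vertex mulnC -sum_nat_const; apply: eq_bigr => y _.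
rewrite -big_split -[RHS](card_cube_nbrs y) card_set_sum; apply: eq_bigr => x _ /=.
by case adj_xy: (cube_adj x y); rewrite //= (ho x y adj_xy); case: (o y x).
Qed.

Lemma indeg_two_values_count n a b (o : cube_vertex n -> cube_vertex n -> bool) :
  0 < n -> is_orientation o -> (forall v, indeg o v = a \/ indeg o v = b) ->
  exists s t : nat, s + t = 2 ^ n /\ a * s + b * t = n * 2 ^ n.-1.
Proof.
move=> n_gt0 ho hv.
exists #|[set v | indeg o v == a]|, #|[set v | indeg o v != a]|; split.
  rewrite !card_set_sum -big_split /= -card_cube_vertex -sum1_card.
  by apply: eq_bigr => v _; case: (indeg o v == a).
apply: double_inj; rewrite -[RHS]mul2n mulnCA -expnS prednK // -(sum_indeg ho).
rewrite !card_set_sum !big_distrr -big_split /=; congr _.*2; apply: eq_bigr => v _.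
case: eqP => [->|neq_a] /=; first by rewrite muln1 muln0 addn0.
by case: (hv v) => // ->; rewrite muln0 muln1.
Qed.

Lemma lxorA : associative Nat.lxor. Proof. by move=> x y z; rewrite Nat.lxor_assoc. Qed.
Lemma lxorC : commutative Nat.lxor. Proof. exact: Nat.lxor_comm. Qed.
Lemma lxor0n : left_id 0 Nat.lxor. Proof. exact: Nat.lxor_0_l. Qed.
HB.instance Definition _ := Monoid.isComLaw.Build nat 0 Nat.lxor lxorA lxorC lxor0n.

Lemma lxorKn x y : Nat.lxor x (Nat.lxor x y) = y.
Proof. by rewrite lxorA Nat.lxor_nilpotent lxor0n. Qed.

Lemma lxor_ltn j x y : x < 2 ^ j -> y < 2 ^ j -> Nat.lxor x y < 2 ^ j.
Proof.
have powE : Nat.pow 2 j = 2 ^ j by elim: j => // k IH; rewrite expnS /= IH.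
rewrite -!powE => /ltP hx /ltP hy; apply/ltP.
have shift0 z : (z < Nat.pow 2 j)%coq_nat -> Nat.shiftr z j = 0.
  by move=> hz; rewrite Nat.shiftr_div_pow2; apply: Nat.div_small.
have := Nat.shiftr_lxor x y j; rewrite (shift0 x hx) (shift0 y hy) Nat.shiftr_div_pow2.
have pow_neq0 : Nat.pow 2 j <> 0 by rewrite powE; apply/eqP; rewrite expn_eq0.
by move=> h; apply/(Nat.div_small_iff _ _ pow_neq0).
Qed.

(* [k |-> lxor x k] permutes [0, 2^j), so it hits [0, c) exactly [c] times. *)
Lemma sum_lxor_ltn j x c : x < 2 ^ j -> c <= 2 ^ j ->
  \sum_(0 <= k < 2 ^ j) (Nat.lxor x k < c) = c.
Proof.
move=> hx hc.
pose h (k : 'I_(2 ^ j)) := Ordinal (lxor_ltn hx (ltn_ord k)).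
have h_inj : injective h.
  by move=> k1 k2 /(congr1 val) /= e; apply: val_inj; rewrite /= -(lxorKn x k1) e lxorKn.
rewrite big_mkord (reindex_inj h_inj) /=.
under eq_bigr do rewrite lxorKn.
rewrite -(big_mkord xpredT (fun k => (k < c) : nat)) (big_cat_nat (leq0n c) hc) /=.
rewrite [X in _ + X]big1_seq ?addn0; last first.
  by move=> k /andP [_]; rewrite mem_index_iota => /andP [c_le_k _]; rewrite ltnNge c_le_k.
rewrite -[RHS]muln1 -[c in RHS]subn0 -sum_nat_const_nat.
by apply: eq_big_nat => k /andP [_ ->].
Qed.

Lemma sum_periodic (F : nat -> nat) p r : 0 < p ->
  \sum_(0 <= k < r * p) F (k %% p) = r * \sum_(0 <= k < p) F k.
Proof.
move=> p_gt0; elim: r => [|r IH]; first by rewrite mul0n big_geq.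
rewrite mulSn addnC (big_cat_nat (leq0n _) (leq_addr p _)) /= IH mulSn addnC.
congr (_ + _); rewrite -{1}[r * p]add0n big_addn addKn.
by apply: eq_big_nat => k /andP [_ hk]; rewrite addnC modnMDl modn_small.
Qed.

Lemma big_lxorD1 (I : finType) (P : pred I) (F : I -> nat) i :
  \big[Nat.lxor/0]_(k | P k) F k =
  Nat.lxor (\big[Nat.lxor/0]_(k | P k && (k != i)) F k) (if P i then F i else 0).
Proof.
case: ifP => Pi; first by rewrite (bigD1 i Pi) lxorC.
by rewrite Nat.lxor_0_r; apply: eq_bigl => k; case: (k =P i) => [->|_]; rewrite ?Pi ?andbT.
Qed.

Lemma sum_pairs_xor_odd (g : nat -> bool) m :
  \sum_(0 <= k < 2 * m) (g k./2 (+) odd k : nat) = m.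
Proof.
elim: m => [|m IH]; first by rewrite big_geq.
rewrite mulnS add2n !big_nat_recr //= IH mul2n uphalf_double doubleK odd_double.
by case: (g m); rewrite /= ?addn0 ?addn1.
Qed.

Section Construction.
Variables (n a d j c r : nat).
Local Notation V := (cube_vertex n).

Definition at_nat (f : 'I_n -> bool) (k : nat) : bool :=
  if insub k is Some i then f i else false.

Lemma at_nat_lt f k (hk : k < n) : at_nat f k = f (Ordinal hk).
Proof. by rewrite /at_nat insubT. Qed.

Lemma at_nat_flip (y : V) i k :
  at_nat (flip y i) k = if k == i then ~~ at_nat y k else at_nat y k.
Proof.
rewrite /at_nat; case: insubP => [u _ <-|hk]; first by rewrite flipE.
by case: eqP => // k_eq_i; move: hk; rewrite k_eq_i ltn_ord.
Qed.

Lemma card_at_nat f : #|[set i | f i]| = \sum_(0 <= k < n) at_nat f k.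
Proof.
rewrite card_set_sum big_mkord; apply: eq_bigr => i _.
by rewrite /at_nat valK.
Qed.

(* Coordinates [0, 2a) form [a] pairs [2p, 2p+1], followed by a block
   [2a, 2a+d) and a tail [2a+d, n); the block is labelled by [block_key]. *)
Definition tail_parity (y : V) : bool := odd (\sum_(i < n | 2 * a <= i) y i).
Definition in_block (i : 'I_n) : bool := 2 * a <= i < 2 * a + d.
Definition block_key (i : 'I_n) : nat := (i - 2 * a) %% 2 ^ j.
Definition block_xor (y : V) : nat :=
  \big[Nat.lxor/0]_(i | in_block i && y i) block_key i.
Definition marked (y : V) : bool := ~~ tail_parity y && (block_xor y < c).

Definition heads (y : V) (i : 'I_n) : bool :=
  if i < 2 * a then (at_nat y (i./2).*2 == at_nat y (i./2).*2.+1) (+) odd i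
  else if in_block i then (if tail_parity y then marked (flip y i) else ~~ marked y)
  else tail_parity y.

Lemma tail_parity_flip (y : V) i :
  tail_parity (flip y i) = (2 * a <= i) (+) tail_parity y.
Proof.
rewrite /tail_parity; case a2_le_i: (2 * a <= i) => /=; last first.
  congr (odd _); apply: eq_bigr => k k_ge; rewrite flipE.
  by case: (k =P i) => // k_eq_i; move: k_ge; rewrite k_eq_i a2_le_i.
rewrite (bigD1 i a2_le_i) [in RHS](bigD1 i a2_le_i) /= flipE eqxx.
under eq_bigr => k /andP [_ /negbTE k_neq_i] do rewrite flipE k_neq_i.
by rewrite !oddD; case: (y i); rewrite /= ?negbK.
Qed.

Lemma block_xor_lt (y : V) : block_xor y < 2 ^ j.
Proof.
apply: (big_ind (fun v => v < 2 ^ j)); [exact: expn_gt0 | exact: lxor_ltn |].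
by move=> i _; rewrite ltn_pmod // expn_gt0.
Qed.

Lemma block_xor_flip (y : V) i :
  block_xor (flip y i) = if in_block i then Nat.lxor (block_xor y) (block_key i) else block_xor y.
Proof.
rewrite /block_xor; case: ifP => blk_i; last first.
  by apply: eq_bigl => k; rewrite flipE; case: (k =P i) => [->|//]; rewrite blk_i.
rewrite (big_lxorD1 _ _ i) [in RHS](big_lxorD1 _ _ i) blk_i flipE eqxx /=.
rewrite (eq_bigl (fun k => (in_block k && y k) && (k != i))); last first.
  by move=> k; rewrite flipE; case: (k =P i) => [->|]; rewrite ?andbF.
case: (y i) => /=; first by rewrite Nat.lxor_0_r -lxorA Nat.lxor_nilpotent Nat.lxor_0_r.
by rewrite Nat.lxor_0_r.
Qed.

Lemma heads_consistent_heads : heads_consistent heads.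
Proof.
move=> y i; rewrite /heads; case: ifP => i_lt.
  rewrite !at_nat_flip; set p := i./2; set o := odd i.
  have -> : nat_of_ord i = o + p.*2 by rewrite odd_double_half.
  by case: o; case: (at_nat y _); case: (at_nat y _);
    rewrite /= ?add0n ?add1n ?eqxx ?(ltn_eqF (ltnSn _)) ?(gtn_eqF (ltnSn _)).
rewrite tail_parity_flip leqNgt i_lt /=; case: ifP => // _.
by rewrite flipK; case: (tail_parity y); rewrite /= ?negbK.
Qed.

Hypothesis block_le : 2 * a + d <= n.

Lemma sum_pair_heads y : \sum_(0 <= k < 2 * a) at_nat (heads y) k = a.
Proof.
rewrite -[RHS](sum_pairs_xor_odd (fun p => at_nat y p.*2 == at_nat y p.*2.+1)).
apply: eq_big_nat => k /andP [_ k_lt].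
by rewrite (at_nat_lt _ (leq_trans k_lt (leq_trans (leq_addr d _) block_le))) /heads /= k_lt.
Qed.

Lemma sum_tail_heads y :
  \sum_(2 * a + d <= k < n) at_nat (heads y) k = (n - (2 * a + d)) * tail_parity y.
Proof.
rewrite -sum_nat_const_nat; apply: eq_big_nat => k /andP [k_ge k_lt].
rewrite (at_nat_lt _ k_lt) /heads /in_block /= ltnNge (leq_trans (leq_addr d _) k_ge) /=.
by rewrite ltnNge k_ge.
Qed.

Lemma sum_block_heads_even y : ~~ tail_parity y ->
  \sum_(2 * a <= k < 2 * a + d) at_nat (heads y) k = d * ~~ marked y.
Proof.
move=> even_y; rewrite -[d in RHS](addKn (2 * a) d) -sum_nat_const_nat.
apply: eq_big_nat => k /andP [k_ge k_lt].
rewrite (at_nat_lt _ (leq_trans k_lt block_le)) /heads /in_block /=.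
by rewrite ltnNge k_ge k_lt (negbTE even_y).
Qed.

Hypothesis d_eq : d = r * 2 ^ j.
Hypothesis c_le : c <= 2 ^ j.

Lemma sum_block_heads_odd y : tail_parity y ->
  \sum_(2 * a <= k < 2 * a + d) at_nat (heads y) k = r * c.
Proof.
move=> odd_y; transitivity
  (\sum_(2 * a <= k < 2 * a + d) (Nat.lxor (block_xor y) ((k - 2 * a) %% 2 ^ j) < c) : nat).
  apply: eq_big_nat => k /andP [k_ge k_lt].
  rewrite (at_nat_lt _ (leq_trans k_lt block_le)) /heads /in_block /= ltnNge k_ge k_lt odd_y.
  by rewrite /marked tail_parity_flip /= k_ge odd_y block_xor_flip /in_block /= k_ge k_lt.
rewrite -{1}[2 * a]add0n big_addn addKn.
under eq_bigr do rewrite addnK.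
rewrite d_eq (sum_periodic (fun k => Nat.lxor (block_xor y) k < c : nat)) ?expn_gt0 //.
by rewrite sum_lxor_ltn // block_xor_lt.
Qed.

Hypothesis count_eq : r * c + n = 2 * (a + d).

Lemma card_heads y : #|[set i | heads y i]| = a \/ #|[set i | heads y i]| = a + d.
Proof.
have a2_le : 2 * a <= 2 * a + d := leq_addr _ _.
rewrite card_at_nat (big_cat_nat (leq0n _) (leq_trans a2_le block_le)).
rewrite (big_cat_nat a2_le block_le) /= sum_pair_heads sum_tail_heads.
case odd_y: (tail_parity y).
  by right; rewrite sum_block_heads_odd // muln1; lia.
rewrite sum_block_heads_even ?odd_y //.
by case: (marked y); [left|right]; rewrite /= ?muln0 ?muln1 ?addn0.
Qed.

End Construction.

(* With [b - a = r 2^j] and [r] odd, the count equation makes [r] divide [2b - n]. *)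
Lemma block_parameters n a b s t : 0 < n -> a <= b -> a + b <= n ->
  s + t = 2 ^ n -> a * s + b * t = n * 2 ^ n.-1 ->
  exists j r c, b - a = r * 2 ^ j /\ c <= 2 ^ j /\ r * c + n = 2 * b.
Proof.
move=> n_gt0 a_le_b ab_le st_eq count_eq.
have K_gt0 : 0 < 2 ^ n.-1 by rewrite expn_gt0.
have two_K : 2 ^ n = 2 * 2 ^ n.-1 by rewrite -expnS prednK.
have n_le : n <= 2 * b by nia.
have diff_eq : (b - a) * s = (2 * b - n) * 2 ^ n.-1 by nia.
have [ba0|ba_gt0] := posnP (b - a); first by exists 0, 0, 0; nia.
have [r r_odd ba_eq] := pfactor_coprime (isT : prime 2) ba_gt0.
set j := logn 2 (b - a) in ba_eq.
have r_dvd : r %| 2 * b - n.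
  have r_K : coprime r (2 ^ n.-1) by rewrite coprimeXr // coprime_sym.
  by rewrite -(Gauss_dvdl _ r_K) -diff_eq ba_eq -mulnA dvdn_mulr.
have r_c : r * ((2 * b - n) %/ r) = 2 * b - n by rewrite mulnC divnK.
exists j, r, ((2 * b - n) %/ r); split=> //; split; last by lia.
have r_gt0 : 0 < r by case: (r) ba_eq ba_gt0 => // ->.
by rewrite -(leq_pmul2l r_gt0) r_c -ba_eq; lia.
Qed.

Lemma exists_heads_le n a b s t : 0 < n -> a <= b -> a + b <= n ->
  s + t = 2 ^ n -> a * s + b * t = n * 2 ^ n.-1 ->
  exists h : cube_vertex n -> 'I_n -> bool, heads_consistent h /\
    forall y, #|[set i | h y i]| = a \/ #|[set i | h y i]| = b.
Proof.
move=> n_gt0 a_le_b ab_le st_eq count_eq.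
have [j [r [c [ba_eq [c_le rc_eq]]]]] := block_parameters n_gt0 a_le_b ab_le st_eq count_eq.
have block_le : 2 * a + (b - a) <= n by lia.
exists (heads a (b - a) j c); split; first exact: heads_consistent_heads.
move=> y; rewrite -[b in _ \/ _ = b](subnKC a_le_b).
by apply: (card_heads block_le ba_eq c_le); rewrite subnKC.
Qed.

Lemma exists_heads n a b s t : 0 < n -> a <= b -> b <= n ->
  s + t = 2 ^ n -> a * s + b * t = n * 2 ^ n.-1 ->
  exists h : cube_vertex n -> 'I_n -> bool, heads_consistent h /\
    forall y, #|[set i | h y i]| = a \/ #|[set i | h y i]| = b.
Proof.
move=> n_gt0 a_le_b b_le st_eq count_eq.
have [ab_le|ab_gt] := leqP (a + b) n; first exact: (exists_heads_le n_gt0 a_le_b ab_le st_eq count_eq).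
have two_K : 2 ^ n = 2 * 2 ^ n.-1 by rewrite -expnS prednK.
have [h [hK h_card]] : exists h : cube_vertex n -> 'I_n -> bool, heads_consistent h /\
    forall y, #|[set i | h y i]| = n - b \/ #|[set i | h y i]| = n - a.
  by apply: (@exists_heads_le _ _ _ t s) => //; nia.
exists (fun y i => ~~ h y i); split; first exact: heads_consistentC.
by move=> y; rewrite card_heads_compl; case: (h_card y) => ->; [right|left]; lia.
Qed.

Theorem theorem1 (n a b : nat) (hn : 0 < n) (ha : a <= n) (hb : b <= n) :
  (exists o : cube_vertex n -> cube_vertex n -> bool,
      is_orientation o /\ forall v : cube_vertex n, indeg o v = a \/ indeg o v = b)
  <->
  (exists s t : nat, s + t = 2 ^ n /\ a * s + b * t = n * 2 ^ n.-1).
Proof.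
split=> [[o [ho hv]]|[s [t [st_eq count_eq]]]]; first exact: indeg_two_values_count hn ho hv.
wlog a_le_b : a b s t ha hb st_eq count_eq / a <= b.
  move=> wlog_ab; have [a_le_b|/ltnW b_le_a] := leqP a b.
    exact: wlog_ab ha hb st_eq count_eq a_le_b.
  have [o [ho hv]] := wlog_ab b a t s hb ha
    (etrans (addnC t s) st_eq) (etrans (addnC _ _) count_eq) b_le_a.
  by exists o; split=> // v; case: (hv v); [right|left].
have [h [hK h_card]] := exists_heads hn a_le_b hb st_eq count_eq.
exists (orient_by h); split; first exact: orient_by_is_orientation.
by move=> v; rewrite indeg_orient_by.
Qed.
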